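(* Let $T(X)=\sum_i V_i^*XV_i$ be a completely positive map on $M_d$ (acting on $H=\mathbb{C}^d$) with $T(I)\le I$ and finite stabilization index, and let $Q$ be its orbit-support projection. Then $T$ is corner-faithful if and only if \[ QH\cap\bigcap_i\ker(V_i^* )=\{0\}, \] equivalently, for every $0\ne v\in QH$ there exists $i$ with $V_i^*v\ne0$.
   Context: $d(T)=I-T(I)$; the stabilization index is $n_T=\min\{n\ge1: T^n(d(T))=0\}$. For positive semidefinite $x$, $\mathrm{supp}(x)$ is the orthogonal projection onto the range of $x$. The orbit-support projection is $Q=\bigvee_{k<n_T}\mathrm{supp}(T^k(d(T)))$. $T$ is corner-faithful if every $x\ge0$, $x\ne0$ with $\mathrm{supp}(x)\le Q$ satisfies $T(x)\ne0$. *)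

(* Complex scalars: an arbitrary numClosedFieldType C
   (e.g. C = R[i] for a realType R, or algC). *)
From HB Require Import structures.
From mathcomp Require Import all_boot all_order all_algebra.
From mathcomp Require Import sesquilinear spectral.
Set Implicit Arguments.
Unset Strict Implicit.
Unset Printing Implicit Defensive.
Import Order.TTheory GRing.Theory Num.Theory.
Local Open Scope ring_scope.
Local Open Scope sesquilinear_scope.

Section Defs.
Variables (C : numClosedFieldType) (d : nat).

(* Operators on H = C^d are d x d matrices acting on column vectors
   v : 'cV_d by v |-> X *m v; the adjoint is X^* = X ^t* (conjugate transpose). *)
Definition adj (X : 'M[C]_d) : 'M[C]_d := X ^t*.

Definition psd (X : 'M[C]_d) : Prop :=
  forall v : 'cV[C]_d, 0 <= (v ^t* *m X *m v) 0 0.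

Definition loewner_le (X Y : 'M[C]_d) : Prop := psd (Y - X).

Definition kraus (r : nat) (V : 'I_r -> 'M[C]_d) (X : 'M[C]_d) : 'M[C]_d :=
  \sum_(i < r) adj (V i) *m X *m V i.

Definition defect (T : 'M[C]_d -> 'M[C]_d) : 'M[C]_d := 1%:M - T 1%:M.

Definition stab_index (T : 'M[C]_d -> 'M[C]_d) (n : nat) : Prop :=
  [/\ (1 <= n)%N, iter n T (defect T) = 0 &
      forall m, (1 <= m)%N -> (m < n)%N -> iter m T (defect T) != 0].

(* Orthogonal projection onto the column space (range) of A.
   proj_ortho U is the (row-vector convention) orthogonal projection onto the
   row space of U; transposing converts to the column-vector convention. *)
Definition range_proj m (A : 'M[C]_(d, m)) : 'M[C]_d := (proj_ortho A^T)^T.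

Definition supp (x : 'M[C]_d) : 'M[C]_d := range_proj x.

Definition pjoin (P R : 'M[C]_d) : 'M[C]_d := range_proj (row_mx P R).

Definition orbit_support (T : 'M[C]_d -> 'M[C]_d) (n : nat) : 'M[C]_d :=
  \big[pjoin/0]_(k < n) supp (iter k T (defect T)).

Definition corner_faithful (T : 'M[C]_d -> 'M[C]_d) (Q : 'M[C]_d) : Prop :=
  forall x : 'M[C]_d, psd x -> x != 0 -> loewner_le (supp x) Q -> T x != 0.

End Defs.

(* The orbit-support projection Q is an orthogonal projection (a range
   projection, or 0 when n = 0), and the equivalence holds for every orthogonal
   projection Q.
   If 0 <> v in QH is killed by every V_i^*, then x = v v^* is a nonzero
   positive matrix with supp x <= Q and T(x) = sum_i (V_i^* v)(V_i^* v)^* = 0.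
   Conversely, let x >= 0 be nonzero with supp x <= Q and T(x) = 0.  The
   positive terms V_i^* x V_i of T(x) must vanish, so x V_i = 0, because a
   positive matrix kills every vector on which its form vanishes.  A nonzero
   x y is then a vector of QH with V_i^* x y = (x V_i)^* y = 0. *)

From mathcomp Require Import all_boot all_order all_algebra.
From mathcomp Require Import sesquilinear spectral ring.
Set Implicit Arguments.
Unset Strict Implicit.
Unset Printing Implicit Defensive.
Import Order.TTheory GRing.Theory Num.Theory.
Local Open Scope ring_scope.
Local Open Scope sesquilinear_scope.

Section ConjugateTranspose.
Variable C : numClosedFieldType.

Lemma trmxC_mul m n p (A : 'M[C]_(m, n)) (B : 'M_(n, p)) :
  (A *m B)^t* = B^t* *m A^t*.
Proof. by rewrite trmx_mul map_mxM. Qed.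

Lemma trmxCD m n (A B : 'M[C]_(m, n)) : (A + B)^t* = A^t* + B^t*.
Proof. by rewrite linearD map_mxD. Qed.

Lemma trmxCB m n (A B : 'M[C]_(m, n)) : (A - B)^t* = A^t* - B^t*.
Proof. by rewrite linearB map_mxB. Qed.

Lemma trmxCZ m n a (A : 'M[C]_(m, n)) : (a *: A)^t* = a^* *: A^t*.
Proof. by rewrite linearZ map_mxZ. Qed.

Lemma trmxC1 n : (1%:M : 'M[C]_n)^t* = 1%:M.
Proof. by rewrite trmx1 map_mx1. Qed.

Lemma trmxC0 m n : (0 : 'M[C]_(m, n))^t* = 0.
Proof. by rewrite trmx0 map_mx0. Qed.

Lemma trmxC_tr m n (A : 'M[C]_(m, n)) : A^T^t* = A^t*^T.
Proof. by rewrite map_trmx. Qed.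

Lemma cV_dotmxE n (u v : 'cV[C]_n) : (u^t* *m v) 0 0 = dotmx v^T u^T.
Proof. by rewrite dotmxE -!trace_mx11 -mxtrace_tr trmx_mul trmxK map_trmx trmxK. Qed.

Lemma cV_dnorm_ge0 n (v : 'cV[C]_n) : 0 <= (v^t* *m v) 0 0.
Proof. by rewrite cV_dotmxE dnorm_ge0. Qed.

Lemma cV_dnorm_eq0 n (v : 'cV[C]_n) : ((v^t* *m v) 0 0 == 0) = (v == 0).
Proof. by rewrite cV_dotmxE dnorm_eq0 trmx_eq0. Qed.

Lemma mulmx_cV_eq0 m n (A : 'M[C]_(m, n)) : (forall v : 'cV_n, A *m v = 0) -> A = 0.
Proof.
move=> A0; apply/matrixP => i j.
by have /matrixP/(_ i 0) := A0 (delta_mx j 0); rewrite -colE !mxE.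
Qed.

End ConjugateTranspose.

Section SesquilinearForm.
Variables (C : numClosedFieldType) (n : nat).
Implicit Types (X Y : 'M[C]_n) (u v : 'cV[C]_n).

Definition mxform X u v : C := (u^t* *m X *m v) 0 0.

Lemma mxformDl X u1 u2 v : mxform X (u1 + u2) v = mxform X u1 v + mxform X u2 v.
Proof. by rewrite /mxform trmxCD !mulmxDl mxE. Qed.

Lemma mxformDr X u v1 v2 : mxform X u (v1 + v2) = mxform X u v1 + mxform X u v2.
Proof. by rewrite /mxform mulmxDr mxE. Qed.

Lemma mxformZl X a u v : mxform X (a *: u) v = a^* * mxform X u v.
Proof. by rewrite /mxform trmxCZ -!scalemxAl mxE. Qed.

Lemma mxformZr X a u v : mxform X u (a *: v) = a * mxform X u v.
Proof. by rewrite /mxform -scalemxAr mxE. Qed.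

Lemma mxformB X Y u v : mxform (X - Y) u v = mxform X u v - mxform Y u v.
Proof. by rewrite /mxform mulmxBr mulmxBl !mxE. Qed.

Lemma conj_mxform X u v : (mxform X u v)^* = mxform (X^t*) v u.
Proof.
have conj11 (M : 'M[C]_1) : (M 0 0)^* = M^t* 0 0 by rewrite !mxE.
by rewrite /mxform conj11 !trmxC_mul trmxCK mulmxA.
Qed.

Lemma mxform_delta X j k : mxform X (delta_mx j 0) (delta_mx k 0) = X j k.
Proof.
rewrite /mxform -colE.
have -> : (delta_mx j 0 : 'cV[C]_n)^t* = delta_mx 0 j.
  by apply/matrixP => a b; rewrite !mxE rmorph_nat andbC.
by rewrite -rowE !mxE.
Qed.

End SesquilinearForm.

Section PositiveSemidefinite.
Variables (C : numClosedFieldType) (n : nat).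
Implicit Types (A X : 'M[C]_n) (v y : 'cV[C]_n).

(* Polarization: the diagonal values of the form at [e_j + e_k] and
   [e_j + i e_k] give [A j k + A k j = 0] and [A j k - A k j = 0]. *)
Lemma mxform_eq0 A : (forall v, mxform A v v = 0) -> A = 0.
Proof.
move=> A0; apply/matrixP => j k; rewrite mxE -mxform_delta.
set ej := delta_mx j 0; set ek := delta_mx k 0.
have := A0 (ej + ek); rewrite !(mxformDl, mxformDr) !A0 add0r addr0 => re0.
have := A0 (ej + 'i *: ek).
rewrite !(mxformDl, mxformDr, mxformZl, mxformZr) !A0 conjCi !mulr0 add0r addr0.
set a := mxform A ej ek; set b := mxform A ek ej => im0.
have : 2 * 'i * a = 'i * (a + b) + ('i * a + - 'i * b) by ring.
rewrite re0 im0 mulr0 addr0 => /eqP.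
by rewrite !mulf_eq0 pnatr_eq0 (negPf (neq0Ci C)) /= => /eqP.
Qed.

Lemma psd_hermitian X : psd X -> X^t* = X.
Proof.
move=> psdX; apply/eqP; rewrite -subr_eq0; apply/eqP/mxform_eq0 => v.
by rewrite mxformB -conj_mxform geC0_conj ?subrr //; apply: psdX.
Qed.

(* With [z = X y], [b = |z|^2] and [c = <z, X z>], positivity of [X] at
   [(c + 1) y - b z] reads [0 <= - b^2 (c + 2)]. *)
Lemma psd_mxform_eq0 X y : psd X -> mxform X y y = 0 -> X *m y = 0.
Proof.
move=> psdX Xy0; set z := X *m y.
set b : C := (z^t* *m z) 0 0; set c := mxform X z z.
have b_ge0 : 0 <= b by apply: cV_dnorm_ge0.
have c_ge0 : 0 <= c by apply: psdX.
have yz : mxform X y z = b.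
  by rewrite /mxform /b /z -{1}(psd_hermitian psdX) -trmxC_mul !mulmxA.
have zy : mxform X z y = b by rewrite /mxform /b /z -mulmxA.
have := psdX ((c + 1) *: y + (- b) *: z).
rewrite -/(mxform _ _ _) !(mxformDl, mxformDr, mxformZl, mxformZr) Xy0 yz zy -/c.
have -> : (c + 1)^* = c + 1 by rewrite geC0_conj ?addr_ge0.
have -> : (- b)^* = - b by apply: conj_Creal; rewrite realN ger0_real.
rewrite [X in 0 <= X -> _](_ : _ = - (b ^+ 2 * (c + 2%:R))); last by ring.
rewrite oppr_ge0 pmulr_lle0 ?ltr_wpDl // => b2_le0.
have /eqP : b ^+ 2 = 0 by apply/le_anti; rewrite b2_le0 exprn_ge0.
by rewrite expf_eq0 /= /b cV_dnorm_eq0 => /eqP.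
Qed.

End PositiveSemidefinite.

Section OrthogonalProjections.
Variable C : numClosedFieldType.

Definition orthoproj n (E : 'M[C]_n) : Prop := E^t* = E /\ E *m E = E.

Lemma orthoproj0 n : orthoproj (0 : 'M[C]_n).
Proof. by rewrite /orthoproj trmxC0 mul0mx. Qed.

Lemma orthoproj1B n (E : 'M[C]_n) : orthoproj E -> orthoproj (1%:M - E).
Proof.
move=> [E_herm E_idem]; split; first by rewrite trmxCB trmxC1 E_herm.
by rewrite mulmxBl mul1mx mulmxBr mulmx1 E_idem subrr subr0.
Qed.

Lemma mxform_orthoproj n (E : 'M[C]_n) v :
  orthoproj E -> mxform E v v = ((E *m v)^t* *m (E *m v)) 0 0.
Proof.
move=> [E_herm E_idem].
by rewrite /mxform trmxC_mul E_herm !mulmxA -(mulmxA _ E E) E_idem.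
Qed.

Lemma orthoproj_psd n (E : 'M[C]_n) : orthoproj E -> psd E.
Proof.
by move=> E_proj v; rewrite -/(mxform _ _ _) mxform_orthoproj // cV_dnorm_ge0.
Qed.

(* The rows of [1 - P] are orthogonal to [U], whose row space contains that
   of [P]; hence [P^t* = P P^t*], which is hermitian. *)
Lemma proj_ortho_hermitian p m (U : 'M[C]_(p, m)) :
  (proj_ortho U)^t* = proj_ortho U.
Proof.
set P := proj_ortho U.
have [Y PE] : exists Y, P = Y *m U.
  by apply/submxP; rewrite -[P]mul1mx proj_ortho_sub.
have compl_U : (1%:M - P) *m U^t* = 0.
  by apply/orthomx1P; rewrite -[P]mul1mx proj_ortho_compl_sub.
have PPt : P *m P^t* = P^t*.
  apply/eqP; rewrite eq_sym -subr_eq0 -{1}[P^t*]mul1mx -mulmxBl.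
  by rewrite {2}PE trmxC_mul mulmxA compl_U mul0mx.
have PPt_herm : (P *m P^t*)^t* = P *m P^t* by rewrite trmxC_mul trmxCK.
by rewrite -[in RHS](trmxCK P) -[in RHS]PPt PPt_herm PPt.
Qed.

Section RangeProjection.
Variables (d m : nat) (A : 'M[C]_(d, m)).

Lemma range_proj_orthoproj : orthoproj (range_proj A).
Proof.
rewrite /orthoproj /range_proj trmxC_tr proj_ortho_hermitian.
by rewrite -trmx_mul proj_ortho_proj.
Qed.

Lemma mul_range_proj : range_proj A *m A = A.
Proof.
by apply: trmx_inj; rewrite [LHS]trmx_mul trmxK proj_ortho_id.
Qed.

Lemma range_projP : exists Y : 'M_(m, d), range_proj A = A *m Y.
Proof.
have /submxP[Y PE] := proj_ortho_sub A^T (1%:M : 'M_d).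
by exists Y^T; rewrite /range_proj -[proj_ortho _]mul1mx PE trmx_mul trmxK.
Qed.

End RangeProjection.

Lemma orbit_support_orthoproj d (T : 'M[C]_d -> 'M[C]_d) k :
  orthoproj (orbit_support T k).
Proof.
case: k => [|k]; first by rewrite /orbit_support big_ord0; apply: orthoproj0.
by rewrite /orbit_support big_ord_recl; apply: range_proj_orthoproj.
Qed.

Lemma orthoproj_le_mulP n (E F : 'M[C]_n) : orthoproj E -> orthoproj F ->
  loewner_le F E <-> E *m F = F.
Proof.
move=> E_proj [F_herm F_idem]; have [E_herm E_idem] := E_proj.
split => [le_FE | EF].
  suff : (1%:M - E) *m F = 0.
    by rewrite mulmxBl mul1mx => /eqP; rewrite subr_eq0 eq_sym => /eqP.
  apply: mulmx_cV_eq0 => y; rewrite -mulmxA; set z := F *m y.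
  have Fzz : mxform F z z = mxform 1%:M z z.
    by rewrite /mxform /z !mulmxA -(mulmxA _ F F) F_idem mulmx1.
  have E'_proj := orthoproj1B E_proj.
  apply/eqP; rewrite -cV_dnorm_eq0 -mxform_orthoproj // eq_le.
  rewrite (orthoproj_psd E'_proj z) andbT.
  by rewrite mxformB -Fzz -oppr_ge0 opprB -mxformB; apply: le_FE.
have FE : F *m E = F by rewrite -[F in LHS]F_herm -E_herm -trmxC_mul EF F_herm.
apply: orthoproj_psd; split; first by rewrite trmxCB E_herm F_herm.
by rewrite mulmxBl !mulmxBr E_idem EF FE F_idem subrr subr0.
Qed.

End OrthogonalProjections.

Section OuterProduct.
Variables (C : numClosedFieldType) (n : nat) (v : 'cV[C]_n).

Lemma psd_outer : psd (v *m v^t*).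
Proof.
move=> y; have -> : y^t* *m (v *m v^t*) *m y = (v^t* *m y)^t* *m (v^t* *m y).
  by rewrite trmxC_mul trmxCK !mulmxA.
exact: cV_dnorm_ge0.
Qed.

Lemma outer_eq0 : (v *m v^t* == 0) = (v == 0).
Proof.
apply/eqP/eqP => [vv0 | ->]; last by rewrite mul0mx.
have /matrixP/(_ 0 0) : (v^t* *m v) *m (v^t* *m v) = 0.
  by rewrite mulmxA -(mulmxA _ v) vv0 mulmx0 mul0mx.
rewrite [LHS]mxE big_ord1 [RHS]mxE => /eqP; rewrite mulf_eq0 orbb cV_dnorm_eq0.
by move/eqP.
Qed.

End OuterProduct.

Section KrausMaps.
Variables (C : numClosedFieldType) (d r : nat) (V : 'I_r -> 'M[C]_d).

Lemma mxform_kraus X y :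
  mxform (kraus V X) y y = \sum_i mxform X (V i *m y) (V i *m y).
Proof.
rewrite /mxform /kraus mulmx_sumr mulmx_suml summxE.
by apply: eq_bigr => i _; rewrite /adj trmxC_mul !mulmxA.
Qed.

Lemma kraus_psd_eq0 x i : psd x -> kraus V x = 0 -> x *m V i = 0.
Proof.
move=> psd_x Tx0; apply: mulmx_cV_eq0 => y; rewrite -mulmxA.
apply: psd_mxform_eq0 => //.
have /psumr_eq0P : \sum_j mxform x (V j *m y) (V j *m y) = 0.
  by rewrite -mxform_kraus Tx0 /mxform mulmx0 mul0mx mxE.
by apply=> // j _; apply: psd_x.
Qed.

Lemma kraus_outer_eq0 (v : 'cV[C]_d) :
  (forall i, adj (V i) *m v = 0) -> kraus V (v *m v^t*) = 0.
Proof. by move=> ker_v; apply: big1 => i _; rewrite mulmxA ker_v !mul0mx. Qed.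

Theorem kraus_corner_faithfulP (Q : 'M[C]_d) : orthoproj Q ->
  corner_faithful (kraus V) Q <->
  (forall v : 'cV[C]_d, (exists w, v = Q *m w) ->
     (forall i, adj (V i) *m v = 0) -> v = 0).
Proof.
move=> Q_proj; have [_ Q_idem] := Q_proj.
have supp_leP P : loewner_le (supp P) Q <-> Q *m range_proj P = range_proj P.
  exact: orthoproj_le_mulP (range_proj_orthoproj P).
split => [faithful _ [w ->] ker_v | ker_trivial x psd_x x_neq0 /supp_leP le_x_Q].
  set v := Q *m w; have Qv : Q *m v = v by rewrite mulmxA Q_idem.
  have le_vv : loewner_le (supp (v *m v^t*)) Q.
    by apply/supp_leP; have [Y ->] := range_projP (v *m v^t*); rewrite !mulmxA Q_idem.
  apply/eqP; rewrite -(outer_eq0 v); apply/negPn/negP => vv_neq0.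
  by have := faithful _ (psd_outer v) vv_neq0 le_vv; rewrite kraus_outer_eq0 ?eqxx.
apply/negP => /eqP Tx0; move/negP: x_neq0; apply; apply/eqP/mulmx_cV_eq0 => y.
apply: ker_trivial => [|i].
  exists (x *m y).
  by rewrite mulmxA -{2}(mul_range_proj x) mulmxA le_x_Q mul_range_proj.
by rewrite /adj mulmxA -(psd_hermitian psd_x) -trmxC_mul kraus_psd_eq0 // trmxC0 mul0mx.
Qed.

End KrausMaps.

Unset Implicit Arguments.

Theorem proposition4p18 (C : numClosedFieldType) (d r : nat)
    (V : 'I_r -> 'M[C]_d) (n : nat) :
  loewner_le (kraus V 1%:M) 1%:M ->
  stab_index (kraus V) n ->
  let Q := orbit_support (kraus V) n in
  (corner_faithful (kraus V) Q <->
     (forall v : 'cV[C]_d, (exists w : 'cV[C]_d, v = Q *m w) ->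
        (forall i : 'I_r, adj (V i) *m v = 0) -> v = 0))
  /\
  (corner_faithful (kraus V) Q <->
     (forall v : 'cV[C]_d, (exists w : 'cV[C]_d, v = Q *m w) -> v != 0 ->
        exists i : 'I_r, adj (V i) *m v != 0)).
Proof.
move=> _ _ Q.
have faithfulP := kraus_corner_faithfulP V (orbit_support_orthoproj (kraus V) n).
split; first exact: faithfulP.
rewrite faithfulP.
split => [ker_trivial v v_range v_neq0 | ker_nontrivial v v_range ker_v].
  apply/existsP; apply: contraNT v_neq0 => /existsPn ker_v.
  by apply/eqP/ker_trivial => // i; apply/eqP/negPn/ker_v.
apply/eqP; apply: contraT => v_neq0.
by have [i] := ker_nontrivial v v_range v_neq0; rewrite ker_v eqxx.
Qed.
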